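(* Let $P$ be a quasi-lattice ordered subsemigroup of a group $Q$ and $\Lambda$ an $(r,d)$-proper topological $P$-graph, with path space $\Omega$, shift $T$ and Toeplitz groupoid $G(\Omega,P,T)$. Then the boundary path space $\partial\Omega$ is a closed invariant subset of $\Omega$ with respect to $G(\Omega,P,T)$.
   Context: Quasi-lattice ordered: $P\subset Q$ subsemigroup with $P\cap P^{-1}=\{e\}$ such that two elements with a common upper bound (for $m\le n$ iff $n=mp$, $p\in P$) have a least upper bound. Topological $P$-graph: small category $\Lambda$, vertices $\Lambda^{(0)}\subset\Lambda$, $r,s:\Lambda\to\Lambda^{(0)}$, composition on pairs with $s(\lambda)=r(\mu)$; $\Lambda,\Lambda^{(0)}$ locally compact Hausdorff, $r,s$ continuous, $s$ a local homeomorphism, inclusion continuous, composition continuous and open; continuous multiplicative $d:\Lambda\to P$, $e$ on vertices, with composition $\Lambda^m*\Lambda^n\to\Lambda^{mn}$ a homeomorphism ($\Lambda^m=d^{-1}(m)$). $(r,d)$-proper: $(r,d):\Lambda\to\Lambda^{(0)}\times P$ proper. $\mu\le\lambda$ iff $\lambda=\mu\nu$. $\Omega$: nonempty closed hereditary directed subsets of $\Lambda$ with the relative Fell topology. $A\cdot n=\{\nu:\exists\mu\in\Lambda^n,\mu\nu\in A\}$. $G(\Omega,P,T)=\{(A,q,B)\in\Omega\times Q\times\Omega:\exists m,n\in P,\ q=mn^{-1},\ A\cdot m=B\cdot n\neq\emptyset\}$ with $(A,q,B)(B,q',C)=(A,qq',C)$, unit space $\Omega$; a subset $Y\subset\Omega$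 is invariant if $(A,q,B)\in G(\Omega,P,T)$ and $B\in Y$ imply $A\in Y$. $E\subset\Lambda$ is exhaustive if for each $\lambda$ with $r(\lambda)\in r(E)$ there is $\mu\in E$ such that $\lambda,\mu$ have a common upper bound; $\lambda\in A$ is extendable in $A$ if for every compact exhaustive $E$ with $r(E)$ a neighborhood of $s(\lambda)$ some $\mu\in E$ has $\lambda\mu\in A$; $\partial\Omega$ is the set of $A\in\Omega$ all of whose elements are extendable in $A$. *)

From HB Require Import structures.
From mathcomp Require Import all_boot all_order all_algebra.
From mathcomp Require Import all_classical all_reals all_analysis.
Set Implicit Arguments. Unset Strict Implicit. Unset Printing Implicit Defensive.
Local Open Scope classical_set_scope.

Record QGroup := {
  gcar :> Type;
  gmul : gcar -> gcar -> gcar;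
  ginv : gcar -> gcar;
  gone : gcar;
  gmulA : forall x y z, gmul x (gmul y z) = gmul (gmul x y) z;
  gmul1l : forall x, gmul gone x = x;
  gmul1r : forall x, gmul x gone = x;
  gmulVl : forall x, gmul (ginv x) x = gone;
  gmulVr : forall x, gmul x (ginv x) = gone }.
Arguments gmul {q}. Arguments ginv {q}. Arguments gone {q}.

Section QLO.
Variables (Q : QGroup) (P : set Q).

Definition subsemigroup := forall m n, P m -> P n -> P (gmul m n).

Definition qle (m n : Q) := exists2 p, P p & n = gmul m p.

Definition quasi_lattice_ordered :=
  [/\ subsemigroup,
      (forall x, (P x /\ P (ginv x)) <-> x = gone) &
      forall m n, P m -> P n ->
        (exists2 u, P u & qle m u /\ qle n u) ->
        exists2 l, P l & [/\ qle m l, qle n l &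
           forall u, P u -> qle m u -> qle n u -> qle l u]].
End QLO.

Record TopPGraph (Q : QGroup) (P : set Q) := {
  V : topologicalType;
  L : topologicalType;
  vinc : V -> L;
  rg : L -> V;
  sc : L -> V;
  comp : L -> L -> L;             (* composition, meaningful when sc x = rg y *)
  deg : L -> Q;
  vinc_inj : injective vinc;
  rg_vinc : forall v, rg (vinc v) = v;
  sc_vinc : forall v, sc (vinc v) = v;
  comp_idl : forall x, comp (vinc (rg x)) x = x;
  comp_idr : forall x, comp x (vinc (sc x)) = x;
  rg_comp : forall x y, sc x = rg y -> rg (comp x y) = rg x;
  sc_comp : forall x y, sc x = rg y -> sc (comp x y) = sc y;
  compA : forall x y z, sc x = rg y -> sc y = rg z ->
     comp x (comp y z) = comp (comp x y) z;
  V_hausdorff : hausdorff_space V;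
  V_lc : locally_compact [set: V];
  L_hausdorff : hausdorff_space L;
  L_lc : locally_compact [set: L];
  rg_cont : continuous rg;
  sc_cont : continuous sc;
  sc_lochomeo : forall x : L, exists U : set L,
     [/\ open U, U x, {in U &, injective sc} &
         forall W : set L, open W -> W `<=` U -> open (sc @` W)];
  vinc_cont : continuous vinc;
  comp_cont : {within [set p : L * L | sc p.1 = rg p.2],
                 continuous (fun p : L * L => comp p.1 p.2)};
  comp_open : forall W : set (L * L), open W ->
     open ((fun p : L * L => comp p.1 p.2) @`
            (W `&` [set p | sc p.1 = rg p.2]));
  (* degree functor into P (P discrete): continuous = locally constant *)
  deg_P : forall x, P (deg x);
  deg_cont : forall p, open (deg @^-1` [set p]);
  deg_comp : forall x y, sc x = rg y -> deg (comp x y) = gmul (deg x) (deg y);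
  deg_vinc : forall v, deg (vinc v) = gone;
  (* unique factorisation: Lambda^m * Lambda^n -> Lambda^{mn} is a homeomorphism *)
  factor_bij : forall m n, P m -> P n -> forall x, deg x = gmul m n ->
     exists! yz : L * L, [/\ deg yz.1 = m, deg yz.2 = n, sc yz.1 = rg yz.2 &
                              comp yz.1 yz.2 = x];
  factor_homeo : forall m n, P m -> P n ->
     exists f : L -> L * L,
       {within deg @^-1` [set gmul m n], continuous f} /\
       forall x, deg x = gmul m n ->
         [/\ deg (f x).1 = m, deg (f x).2 = n, sc (f x).1 = rg (f x).2 &
             comp (f x).1 (f x).2 = x] }.

Section PathSpace.
Variables (Q : QGroup) (P : set Q) (G : TopPGraph P).
Local Notation L := (L G).
Local Notation rg := (@rg _ _ G).
Local Notation sc := (@sc _ _ G).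
Local Notation comp := (@comp _ _ G).
Local Notation deg := (@deg _ _ G).

Definition ple (mu lam : L) := exists nu, sc mu = rg nu /\ lam = comp mu nu.

Definition hereditary (A : set L) := forall lam mu, A lam -> ple mu lam -> A mu.
Definition directed (A : set L) :=
  forall x y, A x -> A y -> exists2 z, A z & ple x z /\ ple y z.

Definition Omega : set (set L) :=
  [set A | A !=set0 /\ closed A /\ hereditary A /\ directed A].

Definition shift (A : set L) (n : Q) : set L :=
  [set nu | exists mu, deg mu = n /\ sc mu = rg nu /\ A (comp mu nu)].

Definition toeplitz_groupoid : set (set L * Q * set L) :=
  [set t | let: (A, q, B) := t in Omega A /\ Omega B /\
     exists m n, [/\ P m, P n, q = gmul m (ginv n),
                     shift A m = shift B n & shift A m !=set0]].

Definition G_invariant (Y : set (set L)) :=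
  forall A q B, toeplitz_groupoid (A, q, B) -> Y B -> Y A.

(** Relative Fell topology on Omega: basic open sets are finite intersections
    of the subbasic sets {C | C cap K = empty} (K compact) and
    {C | C cap U nonempty} (U open). *)
Definition fell_basic (Ks Us : seq (set L)) (C : set L) :=
  (forall K, K \in Ks -> C `&` K = set0) /\
  (forall U, U \in Us -> C `&` U !=set0).

Definition closed_in_Omega (Y : set (set L)) :=
  Y `<=` Omega /\
  forall A, Omega A -> ~ Y A ->
    exists Ks Us : seq (set L),
      [/\ forall K, K \in Ks -> compact K,
          forall U, U \in Us -> open U,
          fell_basic Ks Us A &
          forall C, Omega C -> fell_basic Ks Us C -> ~ Y C].

Definition exhaustive (E : set L) :=
  forall lam, (rg @` E) (rg lam) ->
    exists2 mu, E mu & exists z, ple lam z /\ ple mu z.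

Definition extendable (A : set L) (lam : L) :=
  forall E : set L, compact E -> exhaustive E -> nbhs (sc lam) (rg @` E) ->
    exists2 mu, E mu & sc lam = rg mu /\ A (comp lam mu).

Definition boundary_paths : set (set L) :=
  [set A | Omega A /\ forall lam, A lam -> extendable A lam].
End PathSpace.

(** (r,d)-proper: (r,d) : Lambda -> Lambda^(0) x P proper, P discrete;
    i.e. preimages of K x {p} (K compact) are compact. *)
Definition rd_proper (Q : QGroup) (P : set Q) (G : TopPGraph P) :=
  forall (K : set (V G)) (p : Q), compact K -> P p ->
    compact ((@rg _ _ G) @^-1` K `&` (@deg _ _ G) @^-1` [set p]).

Arguments boundary_paths {Q P} G.
Arguments Omega {Q P} G.
Arguments closed_in_Omega {Q P} G Y.
Arguments G_invariant {Q P} G Y.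
Arguments toeplitz_groupoid {Q P} G.

From HB Require Import structures.
From Pilot Require Import Defs.
From mathcomp Require Import all_boot all_classical all_analysis.
Set Implicit Arguments. Unset Strict Implicit. Unset Printing Implicit Defensive.
Local Open Scope classical_set_scope.

(* A path space A ∈ Ω leaves ∂Ω as soon as one λ ∈ A does not extend into A
   along some compact exhaustive E.  Taking a compact neighbourhood N of λ of
   degree d(λ) with s(N) inside the interior of r(E), the Fell neighbourhood
   {C | C ∩ N·E = ∅, C ∩ int N ≠ ∅} of A avoids ∂Ω, since A contains no path
   of N·E (its only path of degree d(λ) is λ) and a boundary path space meeting
   int N meets N·E; so ∂Ω is closed.
   For invariance, every λ ∈ A lies below some αw ∈ A with d(α) = m and
   w ∈ A·m = B·n, and two facts suffice.  Extendability transfers along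
   A·m = B·n: if βwμ ∈ B then wμ ∈ A·m, and the unique element α of A of
   degree m gives αwμ ∈ A.  Extendability passes to prefixes: if λρ is
   extendable and E is given at s(λ), the tails f of the least common
   extensions rf = μk of paths r near ρ and μ ∈ E form a compact exhaustive
   set at s(ρ) -- compact because by (r,d)-properness only the finitely many
   degrees of E and their lub cofactors occur -- and λρf ∈ A forces r = ρ by
   local injectivity of s, whence λμ ∈ A. *)

Definition pointed_at (X : topologicalType) (x0 : X) : Type := X.
HB.instance Definition _ (X : topologicalType) (x0 : X) :=
  Topological.copy (pointed_at x0) X.
HB.instance Definition _ (X : topologicalType) (x0 : X) :=
  isPointed.Build (pointed_at x0) x0.

Section Topology.
Context {X Y : topologicalType}.

Lemma closed_equalizer (f g : X -> Y) : hausdorff_space Y ->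
  continuous f -> continuous g -> closed [set x | f x = g x].
Proof.
move=> hY cf cg x clx; apply: hY => A B /cf fA /cg gB.
have [y [/= fgy [fyA gyB]]] := clx _ (@filterI _ (nbhs x) _ _ _ fA gB).
by exists (f y); split => //; rewrite fgy.
Qed.

Lemma closed_preimage_within (A : set X) (B : set Y) (f : X -> Y) :
  closed A -> closed B -> {within A, continuous f} -> closed (A `&` f @^-1` B).
Proof. by move=> cA cB cf; rewrite closed_setSI //; exact: preimage_closed. Qed.

Lemma compact_nbhs_subset (x : X) (O : set X) :
  hausdorff_space X -> locally_compact [set: X] -> nbhs x O ->
  exists N, [/\ nbhs x N, compact N & N `<=` O].
Proof.
move=> hX lcX xO; have [C] := lcX x I; rewrite withinET => xC [cC _].
have [D xD DO] := compact_regular hX cC xC xO.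
exists (C `&` closure D); split.
- by apply: filterI => //; apply: filterS xD; exact: subset_closure.
- by apply: compact_closedI => //; exact: closed_closure.
- by move=> y [_ /DO].
Qed.

Lemma bigcup_compact (I : Type) (D : set I) (F : I -> set X) :
  finite_set D -> (forall i, D i -> compact (F i)) ->
  compact (\bigcup_(i in D) F i).
Proof.
move=> /finite_setP[n]; elim: n D => [|n ih] D.
  by rewrite II0 card_eq0 => /eqP -> _; rewrite bigcup_set0; exact: compact0.
move=> /eq_cardSP[i Di /ih cD] cF.
rewrite (bigcup_setD1 _ _ _ Di); apply: compactU; first exact: cF.
by apply: cD => j [/cF].
Qed.

(* [compact_cover] is only stated for pointed spaces; any point makes [X] one. *)
Lemma compact_cover_at (x0 : X) (A : set X) : compact A -> cover_compact A.
Proof.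
by move=> cA; have : @compact (pointed_at x0) A by []; rewrite compact_cover.
Qed.

Lemma locally_constant_finite_image (T : Type) (f : X -> T) (E : set X) :
  (forall t, open (f @^-1` [set t])) -> compact E -> finite_set (f @` E).
Proof.
move=> fo cE; have [->|/set0P[x0 _]] := eqVneq E set0.
  by rewrite image_set0.
have [D _ ED] := compact_cover_at x0 cE (fun i _ => fo (f i))
  (fun x Ex => ex_intro2 _ _ x Ex erefl).
apply: sub_finite_set (finite_image f (finite_fset D)).
by move=> _ [x /ED[i Di /= ->] <-]; exists i.
Qed.

End Topology.

Lemma gmulI (Q : QGroup) (a x y : Q) : gmul a x = gmul a y -> x = y.
Proof. by move/(congr1 (gmul (ginv a))); rewrite !gmulA gmulVl !gmul1l. Qed.

Section LubCofactors.
Variables (Q : QGroup) (P : set Q).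

Definition lub_cofactors (a d p q : Q) :=
  [/\ P p, P q, gmul a p = gmul d q &
      forall u, P u -> qle P a u -> qle P d u -> qle P (gmul a p) u].

(* Junk value [(gone, gone)] when [a] and [d] have no common upper bound. *)
Definition lub_cof (a d : Q) : Q * Q :=
  if pselect (exists pq : Q * Q, lub_cofactors a d pq.1 pq.2) is left h
  then projT1 (cid h) else (gone, gone).

Hypothesis qlo : quasi_lattice_ordered P.

Lemma lub_cofP a d : P a -> P d -> (exists2 u, P u & qle P a u /\ qle P d u) ->
  lub_cofactors a d (lub_cof a d).1 (lub_cof a d).2.
Proof.
move=> Pa Pd ub; rewrite /lub_cof; case: pselect => [h|[]].
  exact: projT2 (cid h).
have [_ _ lub] := qlo; have [_ _ [[p Pp ->] [q Pq adq] least]] := lub _ _ Pa Pd ub.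
by exists (p, q); split.
Qed.

Lemma lub_cof_mem a d : P (lub_cof a d).1 /\ P (lub_cof a d).2.
Proof.
rewrite /lub_cof; case: pselect => [h|_]; first by have [] := projT2 (cid h).
by have [_ one _] := qlo; have [] := (one gone).2 erefl.
Qed.

End LubCofactors.

Section PathSpace.
Variables (Q : QGroup) (P : set Q) (G : TopPGraph P).
Local Notation L := (Defs.L G).
Local Notation rg := (@Defs.rg _ _ G).
Local Notation sc := (@Defs.sc _ _ G).
Local Notation comp := (@Defs.comp _ _ G).
Local Notation deg := (@Defs.deg _ _ G).
Local Notation ple := (@ple _ _ G).
Local Notation Omega := (Omega G).
Implicit Types (x y z a b : L) (A E N : set L).

Definition composable : set (L * L) := [set q | sc q.1 = rg q.2].
Definition compose (q : L * L) : L := comp q.1 q.2.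

Lemma ple_comp x a : sc x = rg a -> ple x (comp x a).
Proof. by move=> xa; exists a. Qed.

Lemma ple_rg x z : ple x z -> rg x = rg z.
Proof. by move=> [a [xa ->]]; rewrite rg_comp. Qed.

Lemma ple_trans x y z : ple x y -> ple y z -> ple x z.
Proof.
move=> [a [xa ->]] [b [ab ->]]; rewrite sc_comp // in ab.
by exists (comp a b); rewrite rg_comp // Defs.compA.
Qed.

Lemma factorization x m n : P m -> P n -> deg x = gmul m n ->
  exists y w, [/\ deg y = m, deg w = n, sc y = rg w & comp y w = x].
Proof.
move=> Pm Pn dx; have [[y w] [[dy dw yw e] _]] := Defs.factor_bij Pm Pn dx.
by exists y, w.
Qed.

Lemma factorization_uniq x a y b : sc x = rg a -> sc y = rg b ->
  comp x a = comp y b -> deg x = deg y -> x = y /\ a = b.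
Proof.
move=> xa yb e dxy.
have dab : deg a = deg b by apply: (@gmulI _ (deg x)); rewrite -deg_comp // e deg_comp // dxy.
have [[y0 z0] [_ uniq]] := Defs.factor_bij (deg_P x) (deg_P a) (deg_comp xa).
have := uniq (y, b) (And4 (esym dxy) (esym dab) yb (esym e)).
by rewrite (uniq (x, a) (And4 erefl erefl xa erefl)) => -[-> ->].
Qed.

Lemma compI x a b : sc x = rg a -> sc x = rg b -> comp x a = comp x b -> a = b.
Proof. by move=> xa xb e; have [] := factorization_uniq xa xb e erefl. Qed.

Lemma ple_deg_uniq x y z : ple x z -> ple y z -> deg x = deg y -> x = y.
Proof.
move=> [a [xa ->]] [b [yb e]] dxy.
by have [] := factorization_uniq xa yb e dxy.
Qed.

Lemma Omega_prefix A x a : Omega A -> sc x = rg a -> A (comp x a) -> A x.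
Proof. by move=> [_ [_ [her _]]] xa /her; apply; exact: ple_comp. Qed.

Lemma Omega_deg_uniq A x y : Omega A -> A x -> A y -> deg x = deg y -> x = y.
Proof.
move=> [_ [_ [_ dir]]] Ax Ay; have [z _ [xz yz]] := dir _ _ Ax Ay.
exact: ple_deg_uniq xz yz.
Qed.

Lemma closed_composable : closed composable.
Proof.
apply: closed_equalizer (@V_hausdorff _ _ G) _ _ => q.
  by apply: continuous_comp; [exact: cvg_fst | exact: sc_cont].
by apply: continuous_comp; [exact: cvg_snd | exact: rg_cont].
Qed.

Lemma compact_compose N E : compact N -> compact E ->
  compact (compose @` ((N `*` E) `&` composable)).
Proof.
move=> cN cE; apply: continuous_compact.
  by apply: continuous_subspaceW (@comp_cont _ _ G); move=> q [].
by apply: compact_closedI; [exact: compact_setX | exact: closed_composable].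
Qed.

Lemma not_boundary_witness A : Omega A -> ~ boundary_paths G A ->
  exists lam E, [/\ A lam, compact E, exhaustive E, nbhs (sc lam) (rg @` E)
    & forall mu, E mu -> sc lam = rg mu -> ~ A (comp lam mu)].
Proof.
move=> OA nbA; have [lam Al nel] : exists2 lam, A lam & ~ extendable A lam.
  apply: contrapT => h; apply: nbA; split => // lam Al.
  by apply: contrapT => ?; apply: h; exists lam.
apply: contrapT => h; apply: nel => E cE exE nE; apply: contrapT => nmu.
by apply: h; exists lam, E; split => // mu Emu lm Alm; apply: nmu; exists mu.
Qed.

Lemma boundary_paths_closed : closed_in_Omega G (boundary_paths G).
Proof.
split=> [A [] // | A OA /(not_boundary_witness OA)[lam [E [Al cE exE lamE nolam]]]].
pose O := deg @^-1` [set deg lam] `&` sc @^-1` (rg @` E)°.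
have [N [lamN cN NO]] : exists N, [/\ nbhs lam N, compact N & N `<=` O].
  apply: compact_nbhs_subset; [exact: L_hausdorff | exact: L_lc |].
  apply: filterI; first by apply: open_nbhs_nbhs; split => //; exact: deg_cont.
  by apply: sc_cont; exact: nbhs_interior.
pose K := compose @` ((N `*` E) `&` composable).
exists [:: K], [:: N°]; split.
- by move=> K'; rewrite mem_seq1 => /eqP ->; exact: compact_compose.
- by move=> U; rewrite mem_seq1 => /eqP ->; exact: open_interior.
- split => S; rewrite mem_seq1 => /eqP ->; last by exists lam.
  apply/seteqP; split => // t [Aam [[a mu] [[/= Na Emu] amu] eam]].
  rewrite -eam in Aam.
  have [dal _] := NO _ Na.
  have eal : a = lam := Omega_deg_uniq OA (Omega_prefix OA amu Aam) Al dal.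
  by rewrite eal in amu Aam; exact: nolam Emu amu Aam.
- move=> C OC [CK CU] [_ bC].
  have [al [Cal alN]] := CU _ (mem_head _ _).
  have [_ alE] := NO _ (interior_subset alN).
  have [mu Emu [alm Calm]] := bC al Cal E cE exE alE.
  have : (C `&` K) (comp al mu).
    by split => //; exists (al, mu) => //; split => //; split => //; exact: interior_subset.
  by rewrite CK ?mem_head.
Qed.

Hypotheses (qlo : quasi_lattice_ordered P) (rdp : rd_proper G).

Lemma path_lub r mu z : ple r z -> ple mu z ->
  exists f k, [/\ sc r = rg f, sc mu = rg k, comp r f = comp mu k,
    lub_cof P (deg r) (deg mu) = (deg f, deg k) & ple (comp r f) z].
Proof.
move=> [g [rg' ->]] [k' [muk' e]].
have qr : qle P (deg r) (deg (comp r g)).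
  by exists (deg g); [exact: deg_P | rewrite deg_comp].
have qmu : qle P (deg mu) (deg (comp r g)).
  by exists (deg k'); [exact: deg_P | rewrite e deg_comp].
have := lub_cofP qlo (deg_P r) (deg_P mu) (ex_intro2 _ _ _ (deg_P _) (conj qr qmu)).
case: (lub_cof P _ _) => p q /= [Pp Pq epq least].
have [c Pc dz] := least _ (deg_P _) qr qmu.
have dg : deg g = gmul p c.
  by apply: (@gmulI _ (deg r)); rewrite -deg_comp // dz gmulA.
have [f [w [df _ fw efw]]] := factorization Pp Pc dg.
have rf : sc r = rg f by rewrite rg' -efw rg_comp.
have drf : deg (comp r f) = gmul (deg mu) q by rewrite deg_comp // df.
have [mu' [k [dmu' dk mk emk]]] := factorization (deg_P mu) Pq drf.
have kw : sc k = rg w by rewrite -(sc_comp mk) emk sc_comp.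
have zf : comp r g = comp (comp r f) w by rewrite -efw Defs.compA.
have emu : mu' = mu.
  apply: (ple_deg_uniq (z := comp r g)) dmu'; last by exists k'.
  by exists (comp k w); rewrite rg_comp // zf -emk Defs.compA.
rewrite emu in mk emk; exists f, k; split => //; first by rewrite df dk.
by exists w; rewrite sc_comp.
Qed.

Lemma rd_proper_compact (K : set (V G)) (S : set Q) :
  compact K -> finite_set S -> S `<=` P -> compact (rg @^-1` K `&` deg @^-1` S).
Proof.
move=> cK fS SP.
have -> : rg @^-1` K `&` deg @^-1` S =
    \bigcup_(p in S) (rg @^-1` K `&` deg @^-1` [set p]).
  by apply/seteqP; split => [x [Kx Sx]|x [p Sp [Kx /= ->]]]; first exists (deg x).
by apply: bigcup_compact => // p Sp; exact: rdp (SP _ Sp).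
Qed.

Section LubTails.
Variables (E N : set L) (a : Q).

(* The tails [f] of the least common extensions [r f = mu k] of some [r] in [N]
   and [mu] in [E]; the degree bounds on [tails] and [heads] are automatic and
   only serve to make compactness visible. *)
Definition lub_tails : set L :=
  let cof d := lub_cof P a d in
  let tails := rg @^-1` (sc @` N) `&` deg @^-1` ((fun d => (cof d).1) @` (deg @` E)) in
  let heads := rg @^-1` (sc @` E) `&` deg @^-1` ((fun d => (cof d).2) @` (deg @` E)) in
  snd @` ((N `*` tails) `&`
    (composable `&` compose @^-1` (compose @` ((E `*` heads) `&` composable)))).

Hypotheses (cE : compact E) (exE : exhaustive E) (cN : compact N).
Hypotheses (N_deg : forall r, N r -> deg r = a)
  (N_rg : forall r, N r -> (rg @` E) (rg r)).

Lemma lub_tails_compact : compact lub_tails.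
Proof.
have fE : finite_set (deg @` E) := locally_constant_finite_image (@deg_cont _ _ G) cE.
have cofP : ((fun d => (lub_cof P a d).1) @` (deg @` E)) `<=` P /\
              ((fun d => (lub_cof P a d).2) @` (deg @` E)) `<=` P.
  by split => _ [d _ <-]; have [] := lub_cof_mem qlo a d.
have scK K : compact K -> compact (sc @` K).
  by move=> cK; apply: continuous_compact => //; exact/continuous_subspaceT/sc_cont.
apply: continuous_compact; first by apply: continuous_subspaceT => x; exact: cvg_snd.
apply: compact_closedI.
  exact: compact_setX cN (rd_proper_compact (scK _ cN) (finite_image _ fE) cofP.1).
apply: closed_preimage_within; [exact: closed_composable | | exact: comp_cont].
apply: compact_closed (@L_hausdorff _ _ G) (compact_compose cE _).
exact: rd_proper_compact (scK _ cE) (finite_image _ fE) cofP.2.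
Qed.

Lemma lub_tails_cover r g : N r -> sc r = rg g ->
  exists2 f, lub_tails f & exists z, ple g z /\ ple f z.
Proof.
move=> Nr rgg.
have [mu Emu [z [rgz muz]]] : exists2 mu, E mu & exists z, ple (comp r g) z /\ ple mu z.
  by apply: exE; rewrite rg_comp //; exact: N_rg.
have [f [k [rf muk e dfk [w [fw ez]]]]] := path_lub (ple_trans (ple_comp rgg) rgz) muz.
rewrite N_deg // in dfk.
have [h [gh ez']] := rgz; rewrite sc_comp // in gh; rewrite sc_comp // in fw.
have ghfw : comp g h = comp f w.
  by apply: (@compI r); rewrite ?rg_comp // !Defs.compA // -ez' ez.
exists f; last by exists (comp g h); split; [exact: ple_comp | rewrite ghfw; exact: ple_comp].
exists (r, f) => //; split.
  by split => //; split; [exists r | exists (deg mu); [exists mu | rewrite dfk]].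
split => //; exists (mu, k); last by rewrite /compose /= e.
by split => //; split => //; split; [exists mu | exists (deg mu); [exists mu | rewrite dfk]].
Qed.

Lemma lub_tails_exhaustive : exhaustive lub_tails.
Proof.
move=> g [_ [[r f] [[Nr _] [/= rf _]] <-] /= fg].
by apply: lub_tails_cover Nr _; rewrite rf.
Qed.

Lemma lub_tails_rg r : N r -> (rg @` lub_tails) (sc r).
Proof.
move=> Nr; have [f Ff [z [vz fz]]] := lub_tails_cover Nr (esym (rg_vinc _)).
by exists f => //; rewrite (ple_rg fz) -(ple_rg vz) rg_vinc.
Qed.

Lemma lub_tails_elim f : lub_tails f -> exists r mu k,
  [/\ N r, E mu, sc r = rg f, sc mu = rg k & comp r f = comp mu k].
Proof.
move=> [[r f'] [[/= Nr _] [/= rf [[mu k] [[/= Emu _] /= muk] e]]] /= <-].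
by exists r, mu, k; split.
Qed.

End LubTails.

Lemma extendable_prefix A lam rho : Omega A -> sc lam = rg rho ->
  A (comp lam rho) -> extendable A (comp lam rho) -> extendable A lam.
Proof.
move=> OA lr Alr extlr E cE exE lamE.
have [U [oU Urho injU scU]] := sc_lochomeo rho.
pose O := U `&` deg @^-1` [set deg rho] `&` rg @^-1` (rg @` E)°.
have [N [rhoN cN NO]] : exists N, [/\ nbhs rho N, compact N & N `<=` O].
  apply: compact_nbhs_subset; [exact: L_hausdorff | exact: L_lc |].
  apply: filterI; first apply: filterI.
  - by apply: open_nbhs_nbhs.
  - by apply: open_nbhs_nbhs; split => //; exact: deg_cont.
  - by apply: rg_cont; rewrite -lr; exact: nbhs_interior.
have N_deg r : N r -> deg r = deg rho by move=> /NO[[]].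
have N_rg r : N r -> (rg @` E) (rg r) by move=> /NO[_ /nbhs_singleton].
have nF : nbhs (sc (comp lam rho)) (rg @` lub_tails E N (deg rho)).
  rewrite sc_comp //; apply: (@filterS _ _ _ (sc @` (N° `&` U))).
    by move=> _ [r [/interior_subset Nr _] <-]; exact: lub_tails_rg.
  apply: open_nbhs_nbhs; split; last by exists rho.
  by apply: scU; [exact: openI (@open_interior _ _) oU | move=> ? []].
have [f Ff [rhof Alrf]] := extlr _ (lub_tails_compact cE cN)
  (lub_tails_exhaustive exE N_deg N_rg) nF.
have [r [mu [k [Nr Emu rf muk erf]]]] := lub_tails_elim Ff.
have err : r = rho.
  have [[Ur _] _] := NO _ Nr.
  by apply: injU; rewrite ?inE // rf -rhof sc_comp.
rewrite {}err in rf erf; exists mu => //.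
have lmu : sc lam = rg mu by rewrite lr -(rg_comp rf) erf rg_comp.
split => //; apply: (Omega_prefix OA (a := k)); first by rewrite sc_comp.
by rewrite -Defs.compA // -erf Defs.compA // -(sc_comp lr).
Qed.

Lemma extendable_shift A B m n al be w :
  Omega A -> Defs.shift A m = Defs.shift B n ->
  deg al = m -> sc al = rg w -> A (comp al w) ->
  deg be = n -> sc be = rg w -> extendable B (comp be w) ->
  extendable A (comp al w).
Proof.
move=> OA shAB dal alw Aalw dbe bew extB E cE exE nE.
have [mu Emu [wmu Bbwmu]] : exists2 mu, E mu & sc (comp be w) = rg mu /\
    B (comp (comp be w) mu).
  by apply: extB; rewrite !sc_comp // in nE *.
rewrite sc_comp // in wmu.
have : Defs.shift A m (comp w mu).
  by rewrite shAB; exists be; rewrite rg_comp // Defs.compA.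
move=> [al' [dal' [alwmu Aal'wmu]]].
have eal : al' = al.
  apply: (Omega_deg_uniq OA (Omega_prefix OA alwmu Aal'wmu) (Omega_prefix OA alw Aalw)).
  by rewrite dal dal'.
exists mu => //; split; first by rewrite sc_comp.
by rewrite -Defs.compA // -eal.
Qed.

Lemma boundary_paths_invariant : G_invariant G (boundary_paths G).
Proof.
move=> A q B [OA [_ [m [n [_ _ _ shAB [nu [al [dal [alnu Aalnu]]]]]]]]] [_ bB].
split => // lam Al; have [_ [_ [_ dirA]]] := OA.
have [z Az [[rho [lrho ez]] [sig [nsig ez']]]] := dirA _ _ Al Aalnu.
rewrite sc_comp // in nsig.
have alw : sc al = rg (comp nu sig) by rewrite rg_comp.
have ezw : z = comp al (comp nu sig) by rewrite ez' -Defs.compA.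
have : Defs.shift B n (comp nu sig) by rewrite -shAB; exists al; rewrite -ezw.
move=> [be [dbe [bew Bbew]]].
have Alr : A (comp lam rho) by rewrite -ez.
apply: (extendable_prefix OA lrho Alr); rewrite -ez ezw.
by apply: extendable_shift OA shAB dal alw _ dbe bew (bB _ Bbew); rewrite -ezw.
Qed.

End PathSpace.

Theorem corollary6p17 (Q : QGroup) (P : set Q) (Lam : TopPGraph P) :
  quasi_lattice_ordered P -> rd_proper Lam ->
  closed_in_Omega Lam (boundary_paths Lam) /\ G_invariant Lam (boundary_paths Lam).
Proof.
move=> qlo rdp; split; first exact: boundary_paths_closed.
exact: boundary_paths_invariant qlo rdp.
Qed.
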